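(* Let $a,b,k,n$ be positive integers with $k=a+b\ge2$ and $n\ge\max\{a,b\}$. Then $$\left(1+\frac an\right)^b\left(1-\frac bn\right)^a\ge1-\frac{\max\{ab^2,ba^2\}}{n^2}\ge1-\frac{(4/27)k^3}{n^2}.$$ *)

From Stdlib Require Import Reals.

(* The key fact is that p |-> (1 - c/p)^p is nondecreasing for p >= max(1, c).
   Applied with c = ab/n it gives (1 - a/n)^b <= (1 - b/n)^a when b <= a, so the
   product is at least (1 - a^2/n^2)^b, and Bernoulli's inequality bounds this by
   1 - b a^2/n^2; the case a <= b is the same with c = -ab/n.  The final bound is
   AM-GM in the form 4 (x + y)^3 - 27 x y^2 = (2x - y)^2 (x + 4y). *)
From Stdlib Require Import Reals Arith.
From Stdlib Require Import Lra Lia.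
Open Scope R_scope.

Lemma one_add_mul_le_pow (h : R) (n : nat) : -1 <= h -> 1 + INR n * h <= (1 + h) ^ n.
Proof.
  intros Hh. induction n as [|n IH].
  - simpl. lra.
  - rewrite S_INR. simpl.
    assert (0 <= INR n) by apply pos_INR.
    assert (0 <= INR n * (h * h)) by (apply Rmult_le_pos; nra).
    nra.
Qed.

Lemma one_sub_div_pow_le_succ (c : R) (p : nat) :
  (1 <= p)%nat -> c <= INR p -> (1 - c / INR p) ^ p <= (1 - c / INR (S p)) ^ S p.
Proof.
  intros Hp Hc. rewrite S_INR.
  assert (HP : 1 <= INR p) by exact (le_INR 1 p Hp).
  set (P := INR p) in *.
  destruct (Req_dec c P) as [->|Hneq].
  - rewrite Rdiv_diag, Rminus_diag, pow_i by (lra || lia).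
    apply pow_le.
    replace (1 - P / (P + 1)) with (/ (P + 1)) by (field; lra).
    left. apply Rinv_0_lt_compat. lra.
  - set (q := 1 - c / P).
    set (h := c / ((P + 1) * (P - c))).
    assert (Hq : 0 < q).
    { unfold q. replace (1 - c / P) with ((P - c) / P) by (field; lra).
      apply Rdiv_pos_pos; lra. }
    (* 1 - c/(P+1) = q (1 + h) and q (1 + (P+1) h) = 1: apply Bernoulli to (1 + h)^(p+1). *)
    assert (Hfactor : 1 - c / (P + 1) = q * (1 + h)) by (unfold q, h; field; lra).
    assert (Hcancel : q * (1 + (P + 1) * h) = 1) by (unfold q, h; field; lra).
    assert (Hh : -1 <= h).
    { unfold h. apply Rmult_le_reg_r with ((P + 1) * (P - c)); [nra|].
      unfold Rdiv. rewrite Rmult_assoc, Rinv_l by nra. nra. }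
    rewrite Hfactor, Rpow_mult_distr.
    assert (Hqp : q ^ p = q ^ S p * (1 + INR (S p) * h)).
    { rewrite S_INR. fold P. transitivity (q ^ p * (q * (1 + (P + 1) * h))).
      - rewrite Hcancel. ring.
      - simpl. ring. }
    rewrite Hqp.
    apply Rmult_le_compat_l; [apply pow_le; lra|].
    exact (one_add_mul_le_pow h (S p) Hh).
Qed.

Lemma one_sub_div_pow_le (c : R) (p q : nat) :
  (1 <= p <= q)%nat -> c <= INR p -> (1 - c / INR p) ^ p <= (1 - c / INR q) ^ q.
Proof.
  intros [Hp Hpq] Hc. induction Hpq as [|q Hpq IH].
  - apply Rle_refl.
  - apply (Rle_trans _ _ _ IH), one_sub_div_pow_le_succ; [lia|].
    apply (Rle_trans _ _ _ Hc), le_INR, Hpq.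
Qed.

Lemma pow_one_sub_swap (t : R) (p q : nat) :
  (1 <= p <= q)%nat -> INR q * t <= 1 ->
  (1 - INR q * t) ^ p <= (1 - INR p * t) ^ q.
Proof.
  intros Hpq Ht.
  assert (Hp : 1 <= INR p) by exact (le_INR 1 p (proj1 Hpq)).
  assert (Hq : 1 <= INR q) by exact (le_INR 1 q (Nat.le_trans _ _ _ (proj1 Hpq) (proj2 Hpq))).
  assert (Hmono := one_sub_div_pow_le (INR p * INR q * t) p q Hpq ltac:(nra)).
  replace (INR p * INR q * t / INR p) with (INR q * t) in Hmono by (field; lra).
  replace (INR p * INR q * t / INR q) with (INR p * t) in Hmono by (field; lra).
  exact Hmono.
Qed.

Lemma pow_one_add_mul_pow_one_sub_ge (m : nat) (x : R) :
  -1 <= x <= 1 -> 1 - INR m * x ^ 2 <= (1 + x) ^ m * (1 - x) ^ m.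
Proof.
  intros Hx. rewrite <- Rpow_mult_distr.
  replace ((1 + x) * (1 - x)) with (1 + - x ^ 2) by ring.
  replace (1 - INR m * x ^ 2) with (1 + INR m * - x ^ 2) by ring.
  apply one_add_mul_le_pow. nra.
Qed.

Lemma pow_one_add_mul_pow_one_sub_swap_ge (a b : nat) (t : R) :
  (1 <= b <= a)%nat -> -1 <= INR a * t <= 1 ->
  1 - INR b * (INR a * t) ^ 2 <= (1 + INR a * t) ^ b * (1 - INR b * t) ^ a.
Proof.
  intros Hba Ht.
  apply (Rle_trans _ ((1 + INR a * t) ^ b * (1 - INR a * t) ^ b)).
  - exact (pow_one_add_mul_pow_one_sub_ge b (INR a * t) Ht).
  - apply Rmult_le_compat_l; [apply pow_le; lra|].
    apply pow_one_sub_swap; [exact Hba | lra].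
Qed.

Lemma one_sub_div_le (u v d : R) : 0 < d -> v <= u -> 1 - u / d <= 1 - v / d.
Proof.
  intros Hd Hvu. unfold Rdiv.
  apply Rplus_le_compat_l, Ropp_le_contravar, Rmult_le_compat_r; [|exact Hvu].
  left. apply Rinv_0_lt_compat, Hd.
Qed.

Lemma pow_one_add_div_mul_pow_one_sub_div_ge (a b : nat) (n : R) :
  (1 <= a)%nat -> (1 <= b)%nat -> INR a <= n -> INR b <= n ->
  1 - Rmax (INR a * INR b ^ 2) (INR b * INR a ^ 2) / n ^ 2
    <= (1 + INR a / n) ^ b * (1 - INR b / n) ^ a.
Proof.
  intros Ha Hb Han Hbn.
  assert (Ha1 : 1 <= INR a) by exact (le_INR 1 a Ha).
  assert (Hb1 : 1 <= INR b) by exact (le_INR 1 b Hb).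
  assert (Hn : 0 < n) by lra.
  assert (Hn2 : 0 < n ^ 2) by (apply pow_lt, Hn).
  assert (Hdiv : forall x : R, 0 <= x <= n -> -1 <= x / n <= 1).
  { intros x Hx. unfold Rdiv. split.
    - apply (Rle_trans _ 0); [lra|].
      apply Rmult_le_pos; [lra | left; apply Rinv_0_lt_compat, Hn].
    - apply Rmult_le_reg_r with n; [exact Hn|].
      rewrite Rmult_assoc, Rinv_l, Rmult_1_r; lra. }
  destruct (le_ge_dec b a) as [Hba|Hab].
  - apply (Rle_trans _ (1 - INR b * INR a ^ 2 / n ^ 2));
      [apply one_sub_div_le; [exact Hn2 | apply Rmax_r]|].
    replace (INR b * INR a ^ 2 / n ^ 2) with (INR b * (INR a / n) ^ 2) by (field; lra).
    apply pow_one_add_mul_pow_one_sub_swap_ge; [lia | apply Hdiv; lra].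
  - apply (Rle_trans _ (1 - INR a * INR b ^ 2 / n ^ 2));
      [apply one_sub_div_le; [exact Hn2 | apply Rmax_l]|].
    assert (Hbt : -1 <= INR b * - / n <= 1).
    { replace (INR b * - / n) with (- (INR b / n)) by (unfold Rdiv; ring).
      assert (Hbn' := Hdiv (INR b) ltac:(lra)). lra. }
    assert (Hswap := pow_one_add_mul_pow_one_sub_swap_ge b a (- / n) ltac:(lia) Hbt).
    replace (INR a * INR b ^ 2 / n ^ 2) with (INR a * (INR b * - / n) ^ 2) by (field; lra).
    replace (1 + INR a / n) with (1 - INR a * - / n) by (unfold Rdiv; ring).
    replace (1 - INR b / n) with (1 + INR b * - / n) by (unfold Rdiv; ring).
    rewrite (Rmult_comm ((1 - INR a * - / n) ^ b)). exact Hswap.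
Qed.

Lemma mul_sq_le_cube_add (x y : R) : 0 <= x -> 0 <= y -> x * y ^ 2 <= 4 / 27 * (x + y) ^ 3.
Proof.
  intros Hx Hy.
  assert (0 <= (2 * x - y) ^ 2 * (x + 4 * y)) by (apply Rmult_le_pos; [apply pow2_ge_0 | lra]).
  nra.
Qed.

Lemma Rmax_mul_sq_le_cube_add (x y : R) :
  0 <= x -> 0 <= y -> Rmax (x * y ^ 2) (y * x ^ 2) <= 4 / 27 * (x + y) ^ 3.
Proof.
  intros Hx Hy. apply Rmax_lub; [now apply mul_sq_le_cube_add|].
  rewrite Rplus_comm. now apply mul_sq_le_cube_add.
Qed.

Theorem lemma5p5 (a b k n : nat)
  (ha : (0 < a)%nat) (hb : (0 < b)%nat) (hk0 : (0 < k)%nat) (hn0 : (0 < n)%nat)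
  (hk : k = (a + b)%nat) (hk2 : (2 <= k)%nat) (hn : (Nat.max a b <= n)%nat) :
  (1 + INR a / INR n) ^ b * (1 - INR b / INR n) ^ a
    >= 1 - Rmax (INR a * INR b ^ 2) (INR b * INR a ^ 2) / INR n ^ 2
  /\ 1 - Rmax (INR a * INR b ^ 2) (INR b * INR a ^ 2) / INR n ^ 2
    >= 1 - (4 / 27) * INR k ^ 3 / INR n ^ 2.
Proof.
  split; apply Rle_ge.
  - apply pow_one_add_div_mul_pow_one_sub_div_ge; try lia; apply le_INR; lia.
  - apply one_sub_div_le.
    + apply pow_lt, lt_0_INR, hn0.
    + subst k. rewrite plus_INR. apply Rmax_mul_sq_le_cube_add; apply pos_INR.
Qed.
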